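(* Let $n\ge2$, let $P=(p_{ij})$ be an $n\times n$ checkerboard copula and $\mathbf{p}=\mathrm{vec}(P)$. Then $$1-\mathrm{tr}(\Xi P\Xi P^\top)=1-\mathbf{p}^\top W\mathbf{p}=\mathbf{p}^\top(V\otimes V)\mathbf{p}.$$
   Context: An $n\times n$ checkerboard copula is a real $n\times n$ matrix with nonnegative entries whose row and column sums all equal $\frac1n$. $\Xi=(\xi_{ij})$ with $\xi_{ij}=1$ if $i=j$, $2$ if $i>j$, $0$ if $i<j$. $J_n$ is the $n\times n$ all-ones matrix and $V=\Xi-J_n$. $\mathrm{vec}(P)=(p_{11},p_{12},\dots,p_{1n},p_{21},\dots,p_{nn})^\top$ (row-major order). $W=\frac12(\Xi\otimes\Xi^\top+\Xi^\top\otimes\Xi)$, where $\otimes$ is the Kronecker product. *)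

From mathcomp Require Import all_boot all_order all_algebra.
From mathcomp Require Export mxtens.
Set Implicit Arguments. Unset Strict Implicit. Unset Printing Implicit Defensive.
Import Order.TTheory GRing.Theory Num.Theory.
Local Open Scope ring_scope.

Definition checkerboard_copula (R : numFieldType) (n : nat) (P : 'M[R]_n) : Prop :=
  (forall i j, 0 <= P i j) /\
  (forall i, \sum_(j < n) P i j = n%:R^-1) /\
  (forall j, \sum_(i < n) P i j = n%:R^-1).

Definition Xi (R : numFieldType) (n : nat) : 'M[R]_n :=
  \matrix_(i, j) (if i == j then 1 else if (j < i)%N then 2 else 0).

Definition Jn (R : numFieldType) (n : nat) : 'M[R]_n := const_mx 1.
Definition Vmx (R : numFieldType) (n : nat) : 'M[R]_n := Xi R n - Jn R n.

(* vec(P) in row-major order: entry of index i*n + j is P i j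
   (mxtens_unindex k = (k %/ n, k %% n)). Column vector. *)
Definition vecr (R : numFieldType) (n : nat) (P : 'M[R]_n) : 'cV[R]_(n * n) :=
  \col_k P (mxtens_unindex k).1 (mxtens_unindex k).2.

(* W = 1/2 (Xi (x) Xi^T + Xi^T (x) Xi), with (x) the Kronecker product tensmx
   ((A *t B) (i*p+k) (j*q+l) = A i j * B k l). *)
Definition Wmx (R : numFieldType) (n : nat) : 'M[R]_(n * n) :=
  2^-1 *: (Xi R n *t (Xi R n)^T + (Xi R n)^T *t Xi R n).

From mathcomp Require Import all_boot all_order all_algebra.
From mathcomp Require Import mxtens.

Set Implicit Arguments.
Unset Strict Implicit.
Unset Printing Implicit Defensive.

Import GRing.Theory Num.Theory.
Local Open Scope ring_scope.

(* The quadratic form of [A (x) B] at [vec P] is [tr (A^T P B P^T)].  For [W] this gives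
   the mean of [tr (Xi^T P Xi^T P^T)] and [tr (Xi P Xi P^T)], which agree by transposition.
   Since [Xi + Xi^T = 2 J], [V] is skew-symmetric, so the form of [V (x) V] is
   [- tr (V P V P^T)].  Expanding [V = Xi - J], every term containing [J] collapses to
   [n^-2 tr (J M)] because [P J = J P = n^-1 J], and [tr (J Xi) = tr (J J) = n^2];
   what remains is [1 - tr (Xi P Xi P^T)]. *)

Lemma sum_mxtens_index (V : nmodType) m n (F : 'I_(m * n) -> V) :
  \sum_k F k = \sum_i \sum_j F (mxtens_index (i, j)).
Proof.
rewrite pair_big (reindex (@mxtens_index m n)) /=; last first.
  by exists (@mxtens_unindex m n) => k _; rewrite (mxtens_indexK, mxtens_unindexK).
by apply: eq_bigr => -[i j].
Qed.

Lemma vecr_tens_form (R : numFieldType) n (A B P : 'M[R]_n) :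
  ((vecr P)^T *m (A *t B) *m vecr P) 0 0 = \tr (A^T *m P *m B *m P^T).
Proof.
transitivity (\sum_x \sum_y (\sum_w \sum_z P w z * (A w x * B z y)) * P x y).
  rewrite mxE sum_mxtens_index; apply: eq_bigr => x _; apply: eq_bigr => y _.
  rewrite !mxE mxtens_indexK sum_mxtens_index; congr (_ * _).
  by apply: eq_bigr => w _; apply: eq_bigr => z _; rewrite !mxE !mxtens_indexK.
apply: eq_bigr => x _; rewrite mxE; apply: eq_bigr => y _.
rewrite !mxE exchange_big; congr (_ * _); apply: eq_bigr => z _.
by rewrite mxE mulr_suml; apply: eq_bigr => w _; rewrite !mxE mulrCA mulrA.
Qed.

Section XiJn.

Variables (R : numFieldType) (n : nat).
Local Notation X := (Xi R n).
Local Notation J := (Jn R n).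

Lemma trmx_Jn : J^T = J.
Proof. exact: trmx_const. Qed.

Lemma mulJnJn : J *m J = n%:R *: J.
Proof.
apply/matrixP => i j; rewrite !mxE mulr1.
by under eq_bigr do rewrite !mxE mulr1; rewrite sumr_const card_ord.
Qed.

Lemma mxtrace_Jn : \tr J = n%:R.
Proof.
by rewrite /mxtrace (eq_bigr (fun=> 1)) => [|i _]; rewrite ?sumr_const ?card_ord ?mxE.
Qed.

Lemma Xi_add_trmx : X + X^T = 2%:R *: J.
Proof.
apply/matrixP => i j; rewrite !mxE -!val_eqE /= mulr1.
by case: ltngtP; rewrite ?addr0 ?add0r.
Qed.

Lemma trmx_Vmx : (Vmx R n)^T = - Vmx R n.
Proof.
rewrite /Vmx linearB /= trmx_Jn opprB; apply: (addIr X).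
by rewrite addrAC [X^T + X]addrC Xi_add_trmx subrK scaler_nat mulr2n addrK.
Qed.

(* [tr (J M)] sums the entries of [M]; it takes the same value at [Xi] and [Xi^T], whose sum is [2 J]. *)
Lemma mxtrace_Jn_Xi : \tr (J *m X) = (n * n)%:R.
Proof.
have trJXT : \tr (J *m X^T) = \tr (J *m X).
  by rewrite -{1}trmx_Jn -trmx_mul mxtrace_tr mxtrace_mulC.
have twice : 2%:R * \tr (J *m X) = 2%:R * (n * n)%:R.
  rewrite mulr_natl mulr2n -{2}trJXT -mxtraceD -mulmxDr Xi_add_trmx.
  by rewrite -scalemxAr mxtraceZ mulJnJn mxtraceZ mxtrace_Jn natrM.
by apply: mulfI twice; rewrite pnatr_eq0.
Qed.

End XiJn.

Section ConstantLineSums.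

Variables (R : numFieldType) (n : nat) (P : 'M[R]_n) (r s : R).
Hypothesis rowsumP : forall i, \sum_j P i j = r.
Hypothesis colsumP : forall j, \sum_i P i j = s.
Local Notation J := (Jn R n).

Lemma mulmx_Jn : P *m J = r *: J.
Proof.
apply/matrixP => i j; rewrite !mxE mulr1 -(rowsumP i).
by apply: eq_bigr => k _; rewrite mxE mulr1.
Qed.

Lemma mulJn_mx : J *m P = s *: J.
Proof.
apply/matrixP => i j; rewrite !mxE mulr1 -(colsumP j).
by apply: eq_bigr => k _; rewrite mxE mul1r.
Qed.

Lemma mulmx_Jn_trmx : P *m J *m P^T = r ^+ 2 *: J.
Proof.
rewrite mulmx_Jn -scalemxAl -trmx_Jn -trmx_mul mulmx_Jn.
by rewrite linearZ /= trmx_Jn scalerA.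
Qed.

Lemma trmx_mulJn_mx : P^T *m J *m P = s ^+ 2 *: J.
Proof.
rewrite -mulmxA mulJn_mx -scalemxAr -trmx_Jn -trmx_mul mulJn_mx.
by rewrite linearZ /= trmx_Jn scalerA.
Qed.

Lemma mxtrace_mulmx_Jn_trmx (M : 'M[R]_n) :
  \tr (M *m P *m J *m P^T) = r ^+ 2 * \tr (M *m J).
Proof.
by rewrite -!mulmxA [P *m _]mulmxA mulmx_Jn_trmx -scalemxAr mxtraceZ.
Qed.

Lemma mxtrace_mulJn_trmx (M : 'M[R]_n) :
  \tr (J *m P *m M *m P^T) = s ^+ 2 * \tr (J *m M).
Proof.
by rewrite mxtrace_mulC !mulmxA trmx_mulJn_mx -scalemxAl mxtraceZ.
Qed.

End ConstantLineSums.

Theorem lemma1 (R : realFieldType) (n : nat) (P : 'M[R]_n) :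
  (2 <= n)%N -> checkerboard_copula P ->
  let p := vecr P in
  1 - \tr (Xi R n *m P *m Xi R n *m P^T) = 1 - (p^T *m Wmx R n *m p) 0 0 /\
  1 - (p^T *m Wmx R n *m p) 0 0 = (p^T *m (Vmx R n *t Vmx R n) *m p) 0 0.
Proof.
move=> n_ge2 [_ [rowsumP colsumP]] p.
set X := Xi R n; set J := Jn R n; set T := \tr (X *m P *m X *m P^T).
have trmx_form : \tr (X^T *m P *m X^T *m P^T) = T.
  by rewrite -mxtrace_tr !trmx_mul !trmxK !mulmxA mxtrace_mulC !mulmxA.
have W_form : (p^T *m Wmx R n *m p) 0 0 = T.
  rewrite /Wmx -scalemxAr -scalemxAl mulmxDr mulmxDl mxE [in LHS]mxE.
  by rewrite !vecr_tens_form trmxK trmx_form -mulr2n -[T *+ 2]mulr_natl mulKf ?pnatr_eq0.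
split; first by rewrite W_form.
have n_neq0 : (n%:R : R) != 0 by rewrite pnatr_eq0 -lt0n (leq_trans _ n_ge2).
have invn2K : n%:R^-1 ^+ 2 * (n * n)%:R = 1 :> R.
  by rewrite natrM -expr2 -exprMn mulVf ?expr1n.
rewrite W_form vecr_tens_form trmx_Vmx /Vmx -/X -/J !mulNmx raddfN /=.
rewrite !(mulmxBl, mulmxBr) !raddfB /=.
rewrite !(mxtrace_mulmx_Jn_trmx rowsumP) !(mxtrace_mulJn_trmx colsumP).
rewrite -/J -/T [\tr (X *m J)]mxtrace_mulC mxtrace_Jn_Xi mulJnJn mxtraceZ mxtrace_Jn.
by rewrite -natrM invn2K !opprK subrr addr0 addrC.
Qed.
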